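(* Let $n\ge 1$, $m\ge 0$ be integers and let non-negative integers $r_0,r_1,\dots,r_n$ satisfy $$r_n=0,\quad r_{n-1}=m,\quad r_\ell\ge 2r_{\ell+1}\ \text{ for } \ell=n-2,\dots,0.$$ Let $k\ge 2r_0+1$ (so $k\ge 2^n m+1$). Let $T$ be an $n$-simplex and define the subsets of $\mathbb T^n_k$: $$S_0(\texttt v)=D(\texttt v,r_0)\quad(\texttt v\in\Delta_0(T)),$$ $$S_\ell(f)=D(f,r_\ell)\setminus\Big[\bigcup_{i=0}^{\ell-1}\bigcup_{e\in\Delta_i(f)}D(e,r_i)\Big]\quad (f\in\Delta_\ell(T),\ \ell=1,\dots,n-1),$$ $$S_n(T)=\mathbb T^n_k\setminus\Big[\bigcup_{i=0}^{n-1}\bigcup_{f\in\Delta_i(T)}D(f,r_i)\Big].$$ Then the sets $S_\ell(f)$, $f\in\Delta_\ell(T)$, $\ell=0,\dots,n$, are pairwise disjoint and their union is $\mathbb T^n_k$. Consequently $$\mathbb P_k(T)=\bigoplus_{\ell=0}^n\bigoplus_{f\in\Delta_\ell(T)}\mathbb P_k(S_\ell(f))\quad\text{(direct sum)}.$$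
   Context: $T\subset\mathbb R^n$ is an $n$-simplex with vertices $\texttt v_0,\dots,\texttt v_n$ and barycentric coordinates $\lambda_0,\dots,\lambda_n$. $\mathbb N$ includes $0$. The simplicial lattice is $\mathbb T^n_k=\{\alpha=(\alpha_0,\dots,\alpha_n)\in\mathbb N^{n+1}:\sum_i\alpha_i=k\}$, and $\lambda^\alpha=\prod_i\lambda_i^{\alpha_i}$. For $S\subseteq\mathbb T^n_k$, $\mathbb P_k(S)=\mathrm{span}\{\lambda^\alpha:\alpha\in S\}$; $\mathbb P_k(T)$ is the space of polynomials of degree $\le k$ on $T$. $\Delta_\ell(T)$ is the set of $\ell$-dimensional sub-simplices (faces) of $T$; each $f\in\Delta_\ell(T)$ is identified with the set of indices of its vertices, $f\subseteq\{0,\dots,n\}$, $|f|=\ell+1$, and $f^*=\{0,\dots,n\}\setminus f$; a vertex $\texttt v_i$ is identified with $\{i\}$. For $\alpha\in\mathbb T^n_k$, $|\alpha_{f^*}|=\sum_{i\in f^*}\alpha_i$ (the distance $\mathrm{dist}(\alpha,f)$). The lattice tube of $f$ with radius $r$ is $D(f,r)=\{\alpha\in\mathbb T^n_k:|\alpha_{f^*}|\le r\}$. *)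

From HB Require Import structures.
From mathcomp Require Import all_boot all_order all_algebra.
From mathcomp Require Import mpoly.
Set Implicit Arguments. Unset Strict Implicit. Unset Printing Implicit Defensive.
Import Order.TTheory GRing.Theory Num.Theory.
Local Open Scope ring_scope.

(* Simplicial lattice T^n_k : multi-indices alpha on the vertex set {0..n}
   ('I_n.+1) with entries <= k and total sum k. *)
Definition lat (n k : nat) : {set {ffun 'I_n.+1 -> 'I_k.+1}} :=
  [set a : {ffun 'I_n.+1 -> 'I_k.+1} | (\sum_i (a i : nat) == k)%N].

(* |alpha_{f*}| = sum over vertices not in f *)
Definition distf (n k : nat) (f : {set 'I_n.+1}) (a : {ffun 'I_n.+1 -> 'I_k.+1}) : nat :=
  (\sum_(i in ~: f) (a i : nat))%N.

Definition tube (n k : nat) (f : {set 'I_n.+1}) (r : nat) :=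
  [set a in lat n k | (distf f a <= r)%N].

(* Delta_l(T): l-dimensional faces, as vertex-index sets of size l+1 *)
Definition faces (n l : nat) : {set {set 'I_n.+1}} :=
  [set f : {set 'I_n.+1} | #|f| == l.+1].

(* S_l(f) = D(f, r_l) \ U_{i<l} U_{e in Delta_i(f)} D(e, r_i).
   For l = 0 this is D(v, r_0); for l = n, f = T it is T^n_k minus the union
   (since D(T, r_n) = T^n_k). *)
Definition Sset (n k : nat) (r : nat -> nat) (l : nat) (f : {set 'I_n.+1}) :=
  tube k f (r l) :\:
    \bigcup_(i < l) \bigcup_(e in faces n i | e \subset f) tube k e (r i).

Definition bmono (R : realFieldType) (n k : nat) (lam : 'I_n.+1 -> {mpoly R[n]})
  (a : {ffun 'I_n.+1 -> 'I_k.+1}) : {mpoly R[n]} :=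
  \prod_i (lam i) ^+ (a i).

Definition inPk (R : realFieldType) (n k : nat) (lam : 'I_n.+1 -> {mpoly R[n]})
  (S : {set {ffun 'I_n.+1 -> 'I_k.+1}}) (p : {mpoly R[n]}) : Prop :=
  exists c : {ffun 'I_n.+1 -> 'I_k.+1} -> R,
    p = \sum_(a in S) c a *: bmono lam a.

(* p belongs to P_k(T): total degree <= k *)
Definition degle (R : realFieldType) (n k : nat) (p : {mpoly R[n]}) : bool :=
  (msize p <= k.+1)%N.

(* Since r_(l+1) <= r_l / 2, a lattice point lying in the tubes of two faces f1, f2 of
   dimensions l1, l2, neither containing the other, is within r_l1 + r_l2 of their common
   face g, because the distance to an intersection is at most the sum of the distances.
   If g is empty this contradicts 2 r_0 < k, the distance of every lattice point to the empty
   face; otherwise r_l1 + r_l2 <= r_i for i = dim g, so the point lies in D(g, r_i) and was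
   removed from S_l1(f1). The S sets cover T^n_k: every point lies in the tube of T, hence in
   the S set of a face of least dimension whose tube contains it.
   The decomposition of P_k(T) then follows from the fact that the Bernstein monomials
   lambda^alpha, alpha in T^n_k, form a basis of P_k(T). They span, since a polynomial of
   degree <= k is the image under X_i |-> lambda_i of a k-homogeneous polynomial (homogenize
   with x_j = sum_i v_i,j lambda_i and 1 = sum_i lambda_i). They are independent, since pulled
   back to the reference simplex lambda^alpha becomes (1 - sum_j x_j)^alpha_0 x^alpha', which
   is triangular with respect to the monomials x^alpha'. *)

From HB Require Import structures.
From mathcomp Require Import all_boot all_order all_algebra.
From mathcomp Require Import mpoly.
From mathcomp Require Import zify.
Import Order.TTheory GRing.Theory Num.Theory.
Local Open Scope ring_scope.
Set Implicit Arguments. Unset Strict Implicit. Unset Printing Implicit Defensive.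

Section PartitionedSpan.
Variables (K : pzRingType) (V : lmodType K) (T I : finType) (b : T -> V).
Variables (L : {set T}) (P : pred I) (S : I -> {set T}).
Hypothesis S_disjoint : forall i j, P i -> P j -> i != j -> [disjoint S i & S j].
Hypothesis L_partition : L = \bigcup_(i | P i) S i.

Lemma partition_uniq i j a : P i -> P j -> a \in S i -> a \in S j -> i = j.
Proof.
move=> Pi Pj ai aj; apply/eqP; apply: contraT => /(S_disjoint Pi Pj).
by move/disjointFr/(_ ai); rewrite aj.
Qed.

Lemma sum_partition (F : T -> V) :
  \sum_(a in L) F a = \sum_(i | P i) \sum_(a in S i) F a.
Proof.
pose S' i := if P i then S i else set0.
have S'_disjoint i j : i != j -> [disjoint S' i & S' j].
  rewrite /S' -setI_eq0; case Pi: (P i); case Pj: (P j);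
    rewrite ?setI0 ?set0I // setI_eq0; exact: S_disjoint.
have -> : L = \bigcup_i S' i by rewrite L_partition big_mkcond.
rewrite partition_disjoint_bigcup // [RHS]big_mkcond.
by apply: eq_bigr => i _; rewrite /S'; case: (P i); rewrite ?big_set0.
Qed.

Lemma partition_direct (pf : I -> V) :
  (forall c : T -> K, \sum_(a in L) c a *: b a = 0 -> {in L, forall a, c a = 0}) ->
  (forall i, P i -> exists c : T -> K, pf i = \sum_(a in S i) c a *: b a) ->
  \sum_(i | P i) pf i = 0 -> forall i, P i -> pf i = 0.
Proof.
move=> b_free pf_span pf_sum0.
have coef i : exists c : T -> K, P i -> pf i = \sum_(a in S i) c a *: b a.
  by have [/pf_span[c ->]|_] := boolP (P i); [exists c | exists (fun _ => 0)].
have [c pfE] := fin_all_exists coef.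
pose C a := if [pick i | P i && (a \in S i)] is Some i then c i a else 0.
have CE j a : P j -> a \in S j -> C a = c j a.
  move=> Pj aj; rewrite /C; case: pickP => [i /andP[Pi ai]|/(_ j)].
    by rewrite (partition_uniq Pi Pj ai aj).
  by rewrite Pj aj.
have S_sub_L j : P j -> S j \subset L.
  by move=> Pj; rewrite L_partition (bigcup_max j).
have C0 : {in L, forall a, C a = 0}.
  apply: b_free; rewrite sum_partition -[RHS]pf_sum0.
  apply: eq_bigr => i Pi; rewrite pfE //.
  by apply: eq_bigr => a ai; rewrite (CE i).
move=> i Pi; rewrite pfE // big1 // => a ai.
by rewrite -(CE i) // C0 ?scale0r // (subsetP (S_sub_L i Pi)).
Qed.

End PartitionedSpan.

Lemma big_faces (V : Type) (idx : V) (op : Monoid.com_law idx) n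
    (F : nat -> {set 'I_n.+1} -> V) :
  \big[op/idx]_(l < n.+1) \big[op/idx]_(f in faces n l) F l f =
  \big[op/idx]_(i : 'I_n.+1 * {set 'I_n.+1} | i.2 \in faces n i.1) F i.1 i.2.
Proof. exact: pair_big_dep. Qed.

Lemma halving_trans (r : nat -> nat) n :
  (forall l, (l.+2 <= n)%N -> (2 * r l.+1 <= r l)%N) ->
  forall i j, (i < j < n)%N -> (2 * r j <= r i)%N.
Proof.
move=> r_half i; elim=> // j IHj /andP[]; rewrite ltnS leq_eqVlt.
case/orP=> [/eqP <- /r_half //|ij jn].
have := r_half j jn; have := IHj (introT andP (conj ij (ltnW jn))); lia.
Qed.

Section LatticeTubes.
Variables (n k : nat) (r : nat -> nat).
Implicit Types (f g e : {set 'I_n.+1}) (a : {ffun 'I_n.+1 -> 'I_k.+1}).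

Lemma distf_setI f1 f2 a : (distf (f1 :&: f2) a <= distf f1 a + distf f2 a)%N.
Proof.
rewrite /distf !(big_mkcond (fun i => i \in ~: _)) -big_split /=.
apply: leq_sum => i _; rewrite !inE negb_and.
by case: (i \in f1); case: (i \in f2); rewrite ?leq_addr ?leq_addl.
Qed.

Lemma distf_set0 a : a \in lat n k -> distf set0 a = k.
Proof.
rewrite inE => /eqP sum_a; rewrite -[RHS]sum_a /distf setC0.
by apply: eq_bigl => i; rewrite inE.
Qed.

Lemma distf_setT a : distf setT a = 0%N.
Proof. by rewrite /distf setCT big_set0. Qed.

Lemma in_tube f s a : (a \in tube k f s) = (a \in lat n k) && (distf f a <= s)%N.
Proof. by rewrite /tube in_set. Qed.

Lemma tube_sub_lat f s : tube k f s \subset lat n k.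
Proof. by apply/subsetP => a; rewrite in_tube => /andP[]. Qed.

Lemma Sset_sub_lat l f : Sset k r l f \subset lat n k.
Proof. by apply/subsetP => a /setDP[/(subsetP (tube_sub_lat _ _))]. Qed.

Lemma SsetP l f a :
  reflect (a \in tube k f (r l) /\
           forall i e, (i < l)%N -> e \in faces n i -> e \subset f -> a \notin tube k e (r i))
          (a \in Sset k r l f).
Proof.
rewrite in_setD; apply: (iffP andP) => [[a_out a_in]|[a_in a_out]]; split=> //.
  move=> i e il ei ef; apply: contra a_out => a_e.
  by apply/bigcupP; exists (Ordinal il) => //; apply/bigcupP; exists e; rewrite ?ei.
by apply/bigcupP => -[i _ /bigcupP[e /andP[ei ef]]]; apply/negP/a_out.
Qed.

Lemma faces_lt l f : f \in faces n l -> (l < n.+1)%N.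
Proof.
by rewrite inE => /eqP <-; apply: leq_trans (max_card _) _; rewrite card_ord.
Qed.

Lemma faces_nsub_lt l f g : f \in faces n l -> ~~ (g \subset f) -> (l < n)%N.
Proof.
rewrite inE => /eqP fl; apply: contraR; rewrite -leqNgt => nl.
have -> : f = setT by apply/eqP; rewrite eqEcard subsetT cardsT card_ord fl.
exact: subsetT.
Qed.

Lemma Sset_nested l1 l2 f1 f2 a :
  f1 \in faces n l1 -> f2 \in faces n l2 -> (l1, f1) != (l2, f2) -> f1 \subset f2 ->
  a \in Sset k r l1 f1 -> a \notin Sset k r l2 f2.
Proof.
move=> f1l1 f2l2 ne sub /SsetP[a1 _]; apply/SsetP => -[_ a2].
have [l12|l21] := ltnP l1 l2; first by rewrite (negPf (a2 l1 f1 l12 f1l1 sub)) in a1.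
move: f1l1 f2l2; rewrite !inE => /eqP c1 /eqP c2.
have [+ _] := subset_leqif_card sub; rewrite c1 c2 ltnS => l12.
have l1l2 : l1 = l2 by apply/eqP; rewrite eqn_leq l21 l12.
have f1f2 : f1 = f2 by apply/eqP; rewrite eqEcard sub c1 c2 l1l2 leqnn.
by move: ne; rewrite l1l2 f1f2 eqxx.
Qed.

Lemma lat_bigcup_Sset :
  lat n k = \bigcup_(l < n.+1) \bigcup_(f in faces n l) Sset k r l f.
Proof.
apply/setP => a; apply/idP/idP => [a_lat|]; last first.
  by case/bigcupP => l _ /bigcupP[f _ /(subsetP (Sset_sub_lat _ _))].
pose near i := [exists e, (e \in faces n i) && (a \in tube k e (r i))].
have near_n : near n.
  by apply/existsP; exists setT; rewrite inE cardsT card_ord eqxx in_tube a_lat distf_setT.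
have [l /existsP[f /andP[fl a_f]] l_min] := ex_minnP (ex_intro near n near_n).
apply/bigcupP; exists (Ordinal (faces_lt fl)) => //; apply/bigcupP; exists f => //.
apply/SsetP; split=> // i e il ei _; apply: contraTN il => a_e; rewrite -leqNgt.
by apply: l_min; apply/existsP; exists e; rewrite ei.
Qed.

Section Halving.
Hypothesis r_halving : forall i j, (i < j < n)%N -> (2 * r j <= r i)%N.

Lemma r_le_r0 l : (l < n)%N -> (r l <= r 0)%N.
Proof.
case: l => // l ln; apply: leq_trans (r_halving (i := 0) (j := l.+1) ln).
exact: leq_pmull.
Qed.

Hypothesis r0_lt_k : (2 * r 0 < k)%N.

Lemma Sset_crossing l1 l2 f1 f2 a :
  f1 \in faces n l1 -> f2 \in faces n l2 -> ~~ (f1 \subset f2) -> ~~ (f2 \subset f1) ->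
  a \in Sset k r l1 f1 -> a \notin Sset k r l2 f2.
Proof.
move=> f1l1 f2l2 nf12 nf21 /SsetP[a1 far1]; apply/negP => /SsetP[a2 _].
have l1n := faces_nsub_lt f1l1 nf21; have l2n := faces_nsub_lt f2l2 nf12.
move: a1 a2; rewrite !in_tube => /andP[a_lat d1] /andP[_ d2].
set g := f1 :&: f2; have dg : (distf g a <= distf f1 a + distf f2 a)%N := distf_setI f1 f2 a.
have [g0|g_neq0] := eqVneq g set0.
  move: dg; rewrite g0 distf_set0 //.
  have := r_le_r0 l1n; have := r_le_r0 l2n; lia.
have g_face : g \in faces n #|g|.-1 by rewrite inE prednK // card_gt0.
have dim_g fj lj : fj \in faces n lj -> ~~ (fj \subset g) -> g \subset fj -> (#|g|.-1 < lj)%N.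
  rewrite inE => /eqP fjl nfg gf; rewrite -ltnS prednK -?fjl; last by rewrite card_gt0.
  by apply: proper_card; rewrite properEneq gf andbT; apply: contraNneq nfg => ->.
have i1 : (#|g|.-1 < l1)%N.
  apply: dim_g f1l1 _ (subsetIl _ _).
  by apply: contra nf12 => /subset_trans; apply; exact: subsetIr.
have i2 : (#|g|.-1 < l2)%N.
  apply: dim_g f2l2 _ (subsetIr _ _).
  by apply: contra nf21 => /subset_trans; apply; exact: subsetIl.
have := far1 _ _ i1 g_face (subsetIl _ _); rewrite in_tube a_lat -ltnNge.
have := r_halving (introT andP (conj i1 l1n)); have := r_halving (introT andP (conj i2 l2n)).
lia.
Qed.

Lemma Sset_disjoint l1 l2 f1 f2 :
  f1 \in faces n l1 -> f2 \in faces n l2 -> (l1, f1) != (l2, f2) ->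
  [disjoint Sset k r l1 f1 & Sset k r l2 f2].
Proof.
move=> f1l1 f2l2 ne; rewrite disjoint_subset; apply/subsetP => a a1; rewrite inE.
have [f12|nf12] := boolP (f1 \subset f2); first exact: Sset_nested a1.
have [f21|nf21] := boolP (f2 \subset f1); last exact: Sset_crossing a1.
by apply: contraL a1; apply: Sset_nested; rewrite // eq_sym.
Qed.

End Halving.
End LatticeTubes.

Section Degree.
Variables (R : realFieldType) (n : nat).
Implicit Types (p q : {mpoly R[n]}).

Lemma degle0 d : degle d (0 : {mpoly R[n]}).
Proof. by rewrite /degle msize0. Qed.

Lemma degleC d c : degle d (c%:MP : {mpoly R[n]}).
Proof. by rewrite /degle msizeC; case: (c != 0). Qed.

Lemma degle1 d : degle d (1 : {mpoly R[n]}).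
Proof. exact: degleC. Qed.

Lemma degleX i : degle 1 ('X_i : {mpoly R[n]}).
Proof. by rewrite /degle msizeX mdeg1. Qed.

Lemma degleW d e p : (d <= e)%N -> degle d p -> degle e p.
Proof. by move=> de /leq_trans; apply. Qed.

Lemma degleD d p q : degle d p -> degle d q -> degle d (p + q).
Proof. by rewrite /degle => dp dq; apply: leq_trans (msizeD_le _ _) _; rewrite geq_max dp. Qed.

Lemma degleN d p : degle d p -> degle d (- p).
Proof. by rewrite /degle msizeN. Qed.

Lemma degleZ d c p : degle d p -> degle d (c *: p).
Proof. exact: leq_trans (msizeZ_le _ _). Qed.

Lemma degle_sum d (I : Type) (s : seq I) (P : pred I) (F : I -> {mpoly R[n]}) :
  (forall i, P i -> degle d (F i)) -> degle d (\sum_(i <- s | P i) F i).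
Proof. by move=> dF; apply: (big_ind (degle d)) => //; [exact: degle0 | exact: degleD]. Qed.

Lemma degleM d e p q : degle d p -> degle e q -> degle (d + e) (p * q).
Proof.
have [->|p0] := eqVneq p 0; first by rewrite mul0r => _ _; exact: degle0.
have [->|q0] := eqVneq q 0; first by rewrite mulr0 => _ _; exact: degle0.
rewrite /degle msizeM // -subn1 leq_subLR add1n => dp dq.
by apply: leq_trans (leq_add dp dq) _; rewrite addSn addnS.
Qed.

Lemma degle_prodXn (I : finType) (t : I -> {mpoly R[n]}) (e : I -> nat) :
  (forall i, degle 1 (t i)) -> degle (\sum_i e i) (\prod_i t i ^+ e i).
Proof.
move=> dt; apply: (big_rec2 (fun d p => degle d p)); first exact: degle1.
move=> i d p _; apply: degleM; elim: (e i) => [|j IHj]; first exact: degle1.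
by rewrite exprS -add1n; apply: degleM.
Qed.

Lemma degle_comp d m (t : m.-tuple {mpoly R[n]}) (p : {mpoly R[m]}) :
  (forall j, degle 1 (tnth t j)) -> degle d p -> degle d (p \mPo t).
Proof.
move=> dt dp; rewrite comp_mpolyE big_seq; apply: degle_sum => mu mu_p; apply: degleZ.
apply: (degleW _ (degle_prodXn _ dt)); rewrite -mdegE -ltnS.
exact: leq_trans (msize_mdeg_lt mu_p) dp.
Qed.

Lemma degle1E p : degle 1 p -> p = (p@_0)%:MP + \sum_j p@_U_(j) *: 'X_j.
Proof.
move=> dp; apply/mpolyP => mu; rewrite mcoeffD mcoeffC raddf_sum /=.
under eq_bigr do rewrite mcoeffZ mcoeffX.
have [->|mu0] := eqVneq mu 0%MM.
  by rewrite mulr1 big1 ?addr0 // => j _; rewrite mnm1_eq0 mulr0.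
rewrite mulr0 add0r.
have [/eqP/mdeg1P[i /eqP ->]|mu_deg] := eqVneq (mdeg mu) 1%N.
  rewrite (bigD1 i) //= eqxx mulr1 big1 ?addr0 // => j /negbTE ji.
  by rewrite eq_mnm1 ji mulr0.
rewrite big1 => [|j _]; last first.
  by case: eqP => [mu_j|]; [rewrite -mu_j mdeg1 in mu_deg | rewrite mulr0].
apply: memN_msupp_eq0; apply: msize_mdeg_ge; apply: leq_trans dp _.
by move: mu0 mu_deg; rewrite -mdeg_eq0; lia.
Qed.

End Degree.

Section AffineEvaluation.
Variables (R : realFieldType) (n : nat).

Definition coefs (p : {mpoly R[n]}) : 'rV[R]_n.+1 :=
  \row_l (if unlift ord0 l is Some j then p@_U_(j) else p@_0).

Definition hcoords (x : 'I_n -> R) : 'cV[R]_n.+1 :=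
  \col_l (if unlift ord0 l is Some j then x j else 1).

Lemma degle1_meval p x : degle 1 p -> p.@[x] = (coefs p *m hcoords x) 0 0.
Proof.
move=> dp; rewrite {1}(degle1E dp) mevalD mevalC raddf_sum /= /coefs /hcoords.
rewrite mxE big_ord_recl !mxE unlift_none mulr1; congr (_ + _); apply: eq_bigr => j _.
by rewrite !mxE liftK mevalZ mevalXU.
Qed.

Lemma degle1_coefs_eq0 p : degle 1 p -> coefs p = 0 -> p = 0.
Proof.
rewrite /coefs => dp /rowP coefs0; rewrite (degle1E dp).
have := coefs0 ord0; rewrite !mxE unlift_none => ->.
rewrite add0r big1 ?mpolyC0 // => j _.
by have := coefs0 (lift ord0 j); rewrite !mxE liftK => ->; rewrite scale0r.
Qed.

End AffineEvaluation.

Lemma sum_mul_delta (K : pzSemiRingType) (I : finType) (F : I -> K) j :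
  \sum_i F i * (i == j)%:R = F j.
Proof. by rewrite (bigD1 j) //= eqxx mulr1 big1 ?addr0 // => i /negbTE->; rewrite mulr0. Qed.

Lemma sum_delta (K : pzSemiRingType) (I : finType) (j : I) : \sum_i (i == j)%:R = 1 :> K.
Proof. by rewrite (bigD1 j) //= eqxx big1 ?addr0 // => i /negbTE->. Qed.

Section Simplex.
Variables (R : realFieldType) (n : nat).
Variables (v : 'I_n.+1 -> 'I_n -> R) (lam : 'I_n.+1 -> {mpoly R[n]}).
Hypothesis lam_deg : forall i, degle 1 (lam i).
Hypothesis lam_vertex : forall i j, (lam i).@[v j] = (i == j)%:R.

Lemma degle1_vanish_vertices q : degle 1 q -> (forall j, q.@[v j] = 0) -> q = 0.
Proof.
move=> dq q0; apply: degle1_coefs_eq0 => //.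
(* The barycentric coordinates give a left, hence two-sided, inverse of the vertex matrix. *)
pose Lam := \matrix_(i, l) coefs (lam i) 0 l.
pose Vert := \matrix_(l, j) hcoords (v j) l 0.
have LamVert : Lam *m Vert = 1%:M.
  apply/matrixP => i j; rewrite mxE [RHS]mxE -lam_vertex degle1_meval //.
  by rewrite !mxE; apply: eq_bigr => l _; rewrite !mxE.
have qVert : coefs q *m Vert = 0.
  apply/rowP => j; rewrite !mxE -[RHS](q0 j) degle1_meval // mxE.
  by apply: eq_bigr => l _; rewrite !mxE.
by rewrite -[coefs q]mulmx1 -(mulmx1C LamVert) mulmxA qVert mul0mx.
Qed.

Lemma sum_lam : \sum_i lam i = 1.
Proof.
apply/eqP; rewrite -subr_eq0; apply/eqP/degle1_vanish_vertices => [|j].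
  by apply: degleD; [exact: degle_sum | exact/degleN/degle1].
by rewrite mevalB meval1 raddf_sum /= (eq_bigr _ (fun i _ => lam_vertex i j)) sum_delta subrr.
Qed.

Lemma sum_vertex_lam j : \sum_i v i j *: lam i = 'X_j.
Proof.
apply/eqP; rewrite -subr_eq0; apply/eqP/degle1_vanish_vertices => [|l].
  by apply: degleD; [apply: degle_sum => i _; exact: degleZ | exact/degleN/degleX].
rewrite mevalB mevalXU raddf_sum /=.
by under eq_bigr do rewrite mevalZ lam_vertex; rewrite sum_mul_delta subrr.
Qed.

End Simplex.

Lemma dhomogXU (R : nzRingType) n (i : 'I_n) : ('X_i : {mpoly R[n]}) \is 1.-homog.
Proof. by rewrite dhomogX /= mdeg1. Qed.

Lemma dhomog_prodXn (R : nzRingType) n (I : finType) (t : I -> {mpoly R[n]}) (e : I -> nat) :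
  (forall i, t i \is 1.-homog) -> \prod_i t i ^+ e i \is (\sum_i e i).-homog.
Proof.
move=> ht; apply: (big_rec2 (fun d (p : {mpoly R[n]}) => p \is d.-homog)).
  exact: dhomog1.
by move=> i d p _; apply: dhomogM; have := dhomogMn (e i) (ht i); rewrite mul1n.
Qed.

Section ReferenceSimplex.
Variables (R : realFieldType) (n : nat).

Definition ref_vertex (l : 'I_n.+1) : 'I_n -> R := fun j => (l == lift ord0 j)%:R.

Definition ref_lam (l : 'I_n.+1) : {mpoly R[n]} :=
  if unlift ord0 l is Some j then 'X_j else 1 - \sum_j 'X_j.

Lemma ref_lam_deg l : degle 1 (ref_lam l).
Proof.
rewrite /ref_lam; case: unlift => [j|]; first exact: degleX.
by apply/degleD/degleN/degle_sum => [|j _]; [exact: degle1 | exact: degleX].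
Qed.

Lemma ref_lam_vertex i j : (ref_lam i).@[ref_vertex j] = (i == j)%:R.
Proof.
rewrite /ref_lam /ref_vertex; case: unliftP => [i' ->|->].
  by rewrite mevalXU eq_sym.
rewrite mevalB meval1 [X in 1 - X]raddf_sum /=; under eq_bigr do rewrite mevalXU.
case: (unliftP ord0 j) => [j' ->|->].
  under eq_bigr do rewrite (inj_eq lift_inj) eq_sym.
  by rewrite sum_delta subrr (negPf (neq_lift _ _)).
by rewrite big1 ?subr0 ?eqxx // => j' _; rewrite (negPf (neq_lift _ _)).
Qed.

Lemma mcoeff0_ref_lam0 d : ((ref_lam ord0 ^+ d)@_0%MM : R) = 1.
Proof.
rewrite /ref_lam unlift_none rmorphXn /= mcoeffB mcoeff1 eqxx raddf_sum /=.
by rewrite big1 ?subr0 ?expr1n // => j _; rewrite mcoeffX mnm1_eq0.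
Qed.

End ReferenceSimplex.

Arguments ref_vertex {R n}.
Arguments ref_lam {R n}.

Lemma mcoeffMX_supp (R : nzRingType) n (p : {mpoly R[n]}) m m' :
  (p * 'X_[m])@_m' != 0 -> exists m'', m' = (m + m'')%MM.
Proof.
rewrite -mcoeff_msupp => m'_supp.
by have /mapP[m'' _ ->] := etrans (esym (perm_mem (msuppMX p m) m')) m'_supp; exists m''.
Qed.

Section BernsteinBasis.
Variables (R : realFieldType) (n k : nat).
Variables (v : 'I_n.+1 -> 'I_n -> R) (lam : 'I_n.+1 -> {mpoly R[n]}).
Hypothesis lam_deg : forall i, degle 1 (lam i).
Hypothesis lam_vertex : forall i j, (lam i).@[v j] = (i == j)%:R.
Implicit Types (a b : {ffun 'I_n.+1 -> 'I_k.+1}) (p : {mpoly R[n]}).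

Definition lam_tuple := [tuple lam i | i < n.+1].

Definition mon_of a : 'X_{1..n.+1} := [multinom (a i : nat) | i < n.+1].

Lemma comp_lam_XU i : 'X_i \mPo lam_tuple = lam i.
Proof. by rewrite comp_mpolyXU -tnth_nth tnth_mktuple. Qed.

Lemma bmono_comp a : bmono lam a = 'X_[mon_of a] \mPo lam_tuple.
Proof. by rewrite comp_mpolyX; apply: eq_bigr => i _; rewrite tnth_mktuple mnmE. Qed.

Lemma mdeg_mon_of a : a \in lat n k -> mdeg (mon_of a) = k.
Proof.
rewrite inE => /eqP sum_a; rewrite -[RHS]sum_a mdegE.
by apply: eq_bigr => i _; rewrite mnmE.
Qed.

Lemma mon_of_inj : injective mon_of.
Proof.
move=> a b /mnmP ab; apply/ffunP => i; apply: val_inj.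
by have := ab i; rewrite !mnmE.
Qed.

Lemma mon_of_onto (m : 'X_{1..n.+1}) : mdeg m = k -> exists2 a, a \in lat n k & mon_of a = m.
Proof.
move=> m_k; have m_le i : (m i < k.+1)%N.
  by rewrite ltnS -m_k mdegE (bigD1 i) //= leq_addr.
exists [ffun i => inord (m i)].
  by rewrite inE -[X in _ == X]m_k mdegE; apply/eqP/eq_bigr => i _; rewrite ffunE inordK.
by apply/mnmP => i; rewrite mnmE ffunE inordK.
Qed.

Lemma homog_inPk (Q : {mpoly R[n.+1]}) :
  Q \is k.-homog -> inPk lam (lat n k) (Q \mPo lam_tuple).
Proof.
move=> Q_homog; exists (fun a => Q@_(mon_of a)).
have QE : Q = \sum_(a in lat n k) Q@_(mon_of a) *: 'X_[mon_of a].
  apply/mpolyP => m; rewrite raddf_sum /=; under eq_bigr do rewrite mcoeffZ mcoeffX.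
  have [/mon_of_onto[a a_lat <-]|m_k] := eqVneq (mdeg m) k.
    rewrite (bigD1 a) //= eqxx mulr1 big1 ?addr0 // => b /andP[_ ba].
    by rewrite (inj_eq mon_of_inj) (negPf ba) mulr0.
  rewrite (dhomog_nemf_coeff Q_homog m_k) big1 // => a a_lat.
  have [am|] := eqVneq (mon_of a) m; last by rewrite mulr0.
  by rewrite -am mdeg_mon_of ?eqxx in m_k.
rewrite {1}QE raddf_sum /=; apply: eq_bigr => a _.
by rewrite comp_mpolyZ bmono_comp.
Qed.

Lemma degle_bmono a : a \in lat n k -> degle k (bmono lam a).
Proof.
rewrite inE => /eqP sum_a; apply: (degleW _ (degle_prodXn (fun i => a i : nat) lam_deg)).
by rewrite sum_a.
Qed.

Lemma inPk_degle (S : {set {ffun 'I_n.+1 -> 'I_k.+1}}) p :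
  S \subset lat n k -> inPk lam S p -> degle k p.
Proof.
move=> S_lat [c ->]; apply: degle_sum => a aS; apply/degleZ/degle_bmono.
exact: subsetP S_lat a aS.
Qed.

Definition vertex_coords : n.-tuple {mpoly R[n.+1]} := [tuple \sum_i v i j *: 'X_i | j < n].

Definition homogenize p : {mpoly R[n.+1]} :=
  \sum_(m <- msupp p) p@_m *: (('X_[m] \mPo vertex_coords) * (\sum_i 'X_i) ^+ (k - mdeg m)).

Lemma homogenize_homog p : degle k p -> homogenize p \is k.-homog.
Proof.
move=> dp; rewrite /homogenize big_seq; apply: rpred_sum => m m_p; apply: rpredZ.
have m_k : (mdeg m <= k)%N by rewrite -ltnS; exact: leq_trans (msize_mdeg_lt m_p) dp.
suff: ('X_[m] \mPo vertex_coords) * (\sum_i 'X_i) ^+ (k - mdeg m)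
    \is (mdeg m + (k - mdeg m)).-homog by rewrite subnKC.
apply: dhomogM.
  rewrite comp_mpolyX mdegE; apply: dhomog_prodXn => j; rewrite tnth_mktuple.
  by apply: rpred_sum => i _; apply/rpredZ/dhomogXU.
have sum_homog : \sum_i 'X_i \is [in R[n.+1], 1.-homog].
  by apply: rpred_sum => i _; exact: dhomogXU.
by have := dhomogMn (k - mdeg m) sum_homog; rewrite mul1n.
Qed.

Lemma comp_lam_sumX : (\sum_i 'X_i) \mPo lam_tuple = 1.
Proof.
rewrite raddf_sum -(sum_lam lam_deg lam_vertex).
by apply: eq_bigr => i _; exact: comp_lam_XU.
Qed.

Lemma comp_lam_vertex_coords j : tnth vertex_coords j \mPo lam_tuple = 'X_j.
Proof.
rewrite tnth_mktuple raddf_sum -(sum_vertex_lam lam_deg lam_vertex).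
by apply: eq_bigr => i _; rewrite /= comp_mpolyZ comp_lam_XU.
Qed.

Lemma homogenizeK p : degle k p -> homogenize p \mPo lam_tuple = p.
Proof.
move=> dp; rewrite [RHS]mpolyE /homogenize raddf_sum /=; apply: eq_bigr => m _.
rewrite comp_mpolyZ comp_mpolyX rmorphM rmorphXn rmorph_prod /=.
rewrite comp_lam_sumX expr1n mulr1 mpolyXE_id; congr (_ *: _).
by apply: eq_bigr => j _; rewrite rmorphXn /= comp_lam_vertex_coords.
Qed.

Lemma degle_inPk_lat p : degle k p -> inPk lam (lat n k) p.
Proof. by move=> dp; rewrite -(homogenizeK dp); apply/homog_inPk/homogenize_homog. Qed.

Definition ref_coords : n.-tuple {mpoly R[n]} := [tuple \sum_l v l j *: ref_lam l | j < n].

Definition pullback p := p \mPo ref_coords.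

Lemma pullback_vertex p j : (pullback p).@[ref_vertex j] = p.@[v j].
Proof.
rewrite comp_mpoly_meval; apply: meval_eq => t; rewrite tnth_mktuple raddf_sum /=.
by under eq_bigr do rewrite mevalZ ref_lam_vertex; rewrite sum_mul_delta.
Qed.

Lemma pullback_lam i : pullback (lam i) = ref_lam i.
Proof.
apply/eqP; rewrite -subr_eq0; apply/eqP.
apply: (degle1_vanish_vertices (@ref_lam_deg R n) (@ref_lam_vertex R n)) => [|j].
  apply/degleD/degleN/ref_lam_deg/degle_comp/lam_deg => j.
  by rewrite tnth_mktuple; apply: degle_sum => l _; apply/degleZ/ref_lam_deg.
by rewrite mevalB pullback_vertex lam_vertex ref_lam_vertex subrr.
Qed.

Definition tail a : 'X_{1..n} := [multinom (a (lift ord0 j) : nat) | j < n].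

Lemma pullback_bmono a : pullback (bmono lam a) = ref_lam ord0 ^+ a ord0 * 'X_[tail a].
Proof.
rewrite /pullback /bmono rmorph_prod big_ord_recl /= rmorphXn /= -/(pullback _) pullback_lam.
congr (_ * _); rewrite mpolyXE_id; apply: eq_bigr => j _.
by rewrite rmorphXn /= -/(pullback _) pullback_lam /ref_lam liftK mnmE.
Qed.

Lemma lat_tail a : a \in lat n k -> (a ord0 + mdeg (tail a))%N = k.
Proof.
rewrite inE big_ord_recl => /eqP sum_a; rewrite -[RHS]sum_a mdegE; congr (_ + _)%N.
by apply: eq_bigr => j _; rewrite mnmE.
Qed.

Lemma tail_inj a b : a \in lat n k -> b \in lat n k -> tail a = tail b -> a = b.
Proof.
move=> a_lat b_lat ab; have a0b0 : (a ord0 : nat) = b ord0.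
  by apply/eqP; rewrite -(eqn_add2r (mdeg (tail a))) {2}ab !lat_tail.
apply/ffunP => i; apply: val_inj; case: (unliftP ord0 i) => [j ->|->] //.
by move/mnmP: ab => /(_ j); rewrite !mnmE.
Qed.

Lemma pullback_bmono_coef a b : a \in lat n k -> b \in lat n k ->
  (a ord0 <= b ord0)%N -> (pullback (bmono lam a))@_(tail b) = (a == b)%:R.
Proof.
move=> a_lat b_lat ab0; rewrite pullback_bmono.
have [<-|ab] := eqVneq a b.
  have := mcoeffMX (ref_lam ord0 ^+ a ord0 : {mpoly R[n]}) (tail a) 0%MM.
  by rewrite addm0 mcoeff0_ref_lam0.
apply/eqP; apply: contraR ab => /mcoeffMX_supp[m tail_b].
have m0 : m = 0%MM.
  apply/eqP; rewrite -mdeg_eq0; apply/eqP; have := congr1 mdeg tail_b.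
  by rewrite mdegD; have := lat_tail a_lat; have := lat_tail b_lat; lia.
by apply/eqP/tail_inj => //; rewrite tail_b m0 addm0.
Qed.

Lemma bmono_free c :
  \sum_(a in lat n k) c a *: bmono lam a = 0 -> {in lat n k, forall a, c a = 0}.
Proof.
move=> sum0 a0 a0_lat; apply: contraTeq isT => ca0.
have [b /andP[b_lat cb] b_max] := @arg_maxnP _ a0 (fun a => (a \in lat n k) && (c a != 0))
  (fun a => a ord0 : nat) (introT andP (conj a0_lat ca0)).
have := congr1 (fun p => (pullback p)@_(tail b)) sum0.
rewrite /pullback raddf0 mcoeff0 [_ \mPo _]raddf_sum raddf_sum /= (bigD1 b) //=.
rewrite big1 => [|a /andP[a_lat ab]].
  rewrite comp_mpolyZ mcoeffZ -/(pullback _) pullback_bmono_coef // eqxx mulr1 addr0.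
  by move/eqP; rewrite (negPf cb).
rewrite comp_mpolyZ mcoeffZ -/(pullback _).
have [->|ca] := eqVneq (c a) 0; first by rewrite mul0r.
by rewrite pullback_bmono_coef ?(negPf ab) ?mulr0 //; apply: b_max; rewrite a_lat ca.
Qed.

End BernsteinBasis.

Theorem mainTheorem1 (R : realFieldType) (n m k : nat) (r : nat -> nat)
  (v : 'I_n.+1 -> 'I_n -> R) (lam : 'I_n.+1 -> {mpoly R[n]}) :
  (1 <= n)%N ->
  r n = 0%N -> r n.-1 = m ->
  (forall l : nat, (l.+2 <= n)%N -> (2 * r l.+1 <= r l)%N) ->
  (2 * r 0%N + 1 <= k)%N ->
  (* lam are the barycentric coordinates of the simplex with vertices v *)
  (forall i, (msize (lam i) <= 2)%N) ->
  (forall i j, (lam i).@[v j] = (i == j)%:R) ->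
  [/\ (* pairwise disjoint *)
      (forall (l1 l2 : nat) f1 f2, f1 \in faces n l1 -> f2 \in faces n l2 ->
         (l1, f1) != (l2, f2) ->
         [disjoint Sset k r l1 f1 & Sset k r l2 f2]),
      (* union is T^n_k *)
      lat n k = \bigcup_(l < n.+1) \bigcup_(f in faces n l) Sset k r l f,
      (* each P_k(S_l(f)) lies in P_k(T) *)
      (forall (l : nat) f p, f \in faces n l -> inPk lam (Sset k r l f) p ->
         degle k p),
      (* P_k(T) = sum of the P_k(S_l(f)) *)
      (forall p : {mpoly R[n]}, degle k p ->
         exists pf : nat -> {set 'I_n.+1} -> {mpoly R[n]},
           (forall (l : nat) f, f \in faces n l -> inPk lam (Sset k r l f) (pf l f)) /\
           p = \sum_(l < n.+1) \sum_(f in faces n l) pf l f)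
    & (* the sum is direct *)
      (forall pf : nat -> {set 'I_n.+1} -> {mpoly R[n]},
         (forall (l : nat) f, f \in faces n l -> inPk lam (Sset k r l f) (pf l f)) ->
         \sum_(l < n.+1) \sum_(f in faces n l) pf l f = 0 ->
         forall (l : nat) f, f \in faces n l -> pf l f = 0)].
Proof.
(* n >= 1, r n = 0 and r n.-1 = m only fix notation: D(T, r) is all of T^n_k for any r. *)
move=> _ _ _ r_half k_gt lam_deg lam_vertex.
have r_halving := halving_trans r_half.
have r0_lt_k : (2 * r 0 < k)%N by rewrite -addn1.
pose P (i : 'I_n.+1 * {set 'I_n.+1}) := i.2 \in faces n i.1.
have S_disjoint i j : P i -> P j -> i != j -> [disjoint Sset k r i.1 i.2 & Sset k r j.1 j.2].
  by case: i j => [l1 f1] [l2 f2]; exact: Sset_disjoint.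
have lat_partition : lat n k = \bigcup_(i | P i) Sset k r i.1 i.2.
  by rewrite (lat_bigcup_Sset n k r) big_faces.
split.
- by move=> l1 l2 f1 f2; exact: Sset_disjoint.
- exact: lat_bigcup_Sset.
- by move=> l f p _; apply/inPk_degle/Sset_sub_lat.
- move=> p /(degle_inPk_lat lam_deg lam_vertex)[c ->].
  pose pf l f := \sum_(a in Sset k r l f) c a *: bmono lam a.
  exists pf; split=> [l f _|]; first by exists c.
  by rewrite (big_faces _ pf) (sum_partition S_disjoint lat_partition).
- move=> pf pf_span pf_sum0 l f fl.
  apply: (partition_direct S_disjoint lat_partition (b := bmono lam)
    (pf := fun i => pf i.1 i.2) _ _ _ (i := (Ordinal (faces_lt fl), f)) fl).
  - exact: bmono_free.
  - by move=> [l' f'] /pf_span.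
  - by rewrite (big_faces _ pf) in pf_sum0.
Qed.
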